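(* Let $\bm A=(A_1,\dots,A_d)$ be Hermitian matrices in $M_n(\mathbb{C})$, $B\in M_n(\mathbb{C})$, and $(\bm\lambda,\nu)\in\mathbb{R}^d\times\mathbb{C}$. Suppose there is a unit vector $\bm\psi\in\mathbb{C}^n$ with $$\sum_{i=1}^d\|A_i\bm\psi-\lambda_i\bm\psi\|^2+\|B\bm\psi-\nu\bm\psi\|^2\le\epsilon_1$$ and that $\sum_{i\neq k}\|[A_i,A_k]\|+\|F_{(\bm\lambda,\nu)}(\bm A,B)\|\le\epsilon_2$, for some $\epsilon_1,\epsilon_2\ge0$. Then $(\bm\lambda,\nu)\in\dot\Lambda^{C}_{\epsilon}(\bm A,B)$ with $\epsilon=\sqrt{\epsilon_1+\epsilon_2}$.
   Context: Let $n,d,m$ be positive integers. Fix Hermitian matrices $\Gamma_1,\dots,\Gamma_d\in M_{2m}(\mathbb{C})$ with $\Gamma_i^2=I_{2m}$ and $\Gamma_i\Gamma_j=-\Gamma_j\Gamma_i$ for $i\neq j$ (a Clifford representation; the paper uses a specific one built from Pauli matrices). Write $P=\begin{bmatrix} I_m&0\\0&0_m\end{bmatrix}$ and $Q=\begin{bmatrix}0_m&0\\0&I_m\end{bmatrix}$ in $M_{2m}(\mathbb{C})$. For a $d$-tuple $\bm A=(A_1,\dots,A_d)$ of Hermitian matrices in $M_n(\mathbb{C})$, a matrix $B\in M_n(\mathbb{C})$ (not necessarily Hermitian or normal), and a probe site $(\bm\lambda,\nu)\in\mathbb{R}^d\times\mathbb{C}$, the non-Hermitian spectral localizer is $$L_{(\bm\lambda,\nu)}(\bm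 A,B)=\sum_{i=1}^d (A_i-\lambda_i I)\otimes\Gamma_i+(B-\nu I)\otimes P-(B-\nu I)^\dagger\otimes Q\in M_{2mn}(\mathbb{C}).$$ The Clifford radial gap is $\dot\mu^{C}_{(\bm\lambda,\nu)}(\bm A,B)=\sigma_{\min}\big(L_{(\bm\lambda,\nu)}(\bm A,B)\big)$, and the Clifford radial $\epsilon$-pseudospectrum is $\dot\Lambda^{C}_\epsilon(\bm A,B)=\{(\bm\lambda,\nu)\in\mathbb{R}^d\times\mathbb{C}:\dot\mu^{C}_{(\bm\lambda,\nu)}(\bm A,B)\le\epsilon\}$. Define $$F_{(\bm\lambda,\nu)}(\bm A,B)=\sum_{i=1}^d\big(G_i+G_i^\dagger\big)-\sum_{i=1}^d\big(H_i+H_i^\dagger\big),\quad G_i=(A_i-\lambda_i I)(B-\nu I)\otimes\Gamma_iP,\quad H_i=(A_i-\lambda_i I)(B-\nu I)^\dagger\otimes\Gamma_iQ.$$ All matrix norms are operator norms; vector norms are Euclidean. *)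

From HB Require Import structures.
From mathcomp Require Import all_boot all_order all_algebra.
From mathcomp Require Import complex mxtens.
From mathcomp Require Import classical_sets reals.
Set Implicit Arguments. Unset Strict Implicit. Unset Printing Implicit Defensive.
Import Order.TTheory GRing.Theory Num.Theory.
Local Open Scope ring_scope.
Local Open Scope classical_set_scope.

Section Defs.
Variable R : realType.
Local Notation C := R[i].

Definition vnorm (n : nat) (v : 'cV[C]_n) : R :=
  Num.sqrt (\sum_(i < n) ComplexField.Normc.normc (v i 0) ^+ 2).

Definition opnorm (p q : nat) (M : 'M[C]_(p, q)) : R :=
  sup [set vnorm (M *m v) | v in [set v : 'cV[C]_q | vnorm v = 1]].

Definition sigma_min (p : nat) (M : 'M[C]_p) : R :=
  inf [set vnorm (M *m v) | v in [set v : 'cV[C]_p | vnorm v = 1]].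

Definition adjmx (p q : nat) (M : 'M[C]_(p, q)) : 'M[C]_(q, p) :=
  map_mx (@conjc R) M^T.

Definition is_hermitian (p : nat) (M : 'M[C]_p) : Prop := adjmx M = M.

Definition clifford_rep (d m : nat) (Gam : 'I_d -> 'M[C]_(m + m)) : Prop :=
  (forall i, is_hermitian (Gam i)) /\
  (forall i, Gam i *m Gam i = 1%:M) /\
  (forall i j, i != j -> Gam i *m Gam j = - (Gam j *m Gam i)).

Definition Pmx (m : nat) : 'M[C]_(m + m) := block_mx 1%:M 0 0 0.
Definition Qmx (m : nat) : 'M[C]_(m + m) := block_mx 0 0 0 1%:M.

Definition rscal (n : nat) (r : R) : 'M[C]_n := ((r%:C)%C)%:M.

Definition localizer (d m n : nat) (Gam : 'I_d -> 'M[C]_(m + m))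
    (A : 'I_d -> 'M[C]_n) (B : 'M[C]_n) (lam : 'I_d -> R) (nu : C)
    : 'M[C]_(n * (m + m)) :=
  \sum_(i < d) ((A i - rscal n (lam i)) *t Gam i)
  + ((B - nu%:M) *t Pmx m) - (adjmx (B - nu%:M) *t Qmx m).

Definition clifford_radial_gap d m n Gam (A : 'I_d -> 'M[C]_n) B lam nu : R :=
  sigma_min (@localizer d m n Gam A B lam nu).

Definition clifford_pseudospectrum d m n Gam (A : 'I_d -> 'M[C]_n) B (eps : R)
    : set (('I_d -> R) * C) :=
  [set p | @clifford_radial_gap d m n Gam A B p.1 p.2 <= eps].

Definition Fmx (d m n : nat) (Gam : 'I_d -> 'M[C]_(m + m))
    (A : 'I_d -> 'M[C]_n) (B : 'M[C]_n) (lam : 'I_d -> R) (nu : C)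
    : 'M[C]_(n * (m + m)) :=
  let G i := ((A i - rscal n (lam i)) *m (B - nu%:M)) *t (Gam i *m Pmx m) in
  let H i := ((A i - rscal n (lam i)) *m adjmx (B - nu%:M)) *t (Gam i *m Qmx m) in
  \sum_(i < d) (G i + adjmx (G i)) - \sum_(i < d) (H i + adjmx (H i)).

End Defs.

(* Test the localizer on the product state psi (x) e, with e a unit vector such that
   P e = e and Q e = 0.  Then L (psi (x) e) = sum_i a_i (x) Gamma_i e + y (x) e with
   a_i = (A_i - lambda_i) psi and y = (B - nu) psi.  In the Gram expansion of its squared
   norm the diagonal terms give sum_i |a_i|^2 + |y|^2 <= eps1, since the Gamma_i e are
   unit vectors; the off-diagonal terms pair up, because <Gamma_k e, Gamma_i e> =
   - <Gamma_i e, Gamma_k e>, into <psi, [A_i, A_k] psi> <Gamma_i e, Gamma_k e>; and the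
   mixed terms add up to exactly <psi (x) e, F (psi (x) e)>.  The last two are bounded by
   eps2, hence sigma_min L <= |L (psi (x) e)| <= sqrt (eps1 + eps2). *)

From HB Require Import structures.
From mathcomp Require Import all_boot all_order all_algebra.
From mathcomp Require Import complex mxtens.
From mathcomp Require Import classical_sets reals.
From mathcomp Require Import ring lra.
Set Implicit Arguments. Unset Strict Implicit. Unset Printing Implicit Defensive.
Import Order.TTheory GRing.Theory Num.Theory.
Local Open Scope ring_scope.
Local Open Scope classical_set_scope.
Local Open Scope complex_scope.

Local Notation normc := (@ComplexField.Normc.normc _).

Lemma commutator_subr_scalar (K : comPzRingType) p (M N : 'M[K]_p) (r s : K) :
  (M - r%:M) *m (N - s%:M) - (N - s%:M) *m (M - r%:M) = M *m N - N *m M.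
Proof.
rewrite !mulmxBl !mulmxBr !mul_mx_scalar !mul_scalar_mx !scale_scalar_mx mulrC.
by rewrite !opprB addrACA !addrA !subrK.
Qed.

Lemma sum_offdiag_antisym (K : pzRingType) p (al be : 'I_p -> 'I_p -> K) :
  (forall i k, i != k -> be k i = - be i k) ->
  (\sum_i \sum_(k | i != k) al i k * be i k) *+ 2
    = \sum_i \sum_(k | i != k) (al i k - al k i) * be i k.
Proof.
move=> anti.
have swap : \sum_i \sum_(k | i != k) al k i * be i k
    = - \sum_i \sum_(k | i != k) al i k * be i k.
  rewrite (exchange_big_dep xpredT) //= -sumrN.
  apply: eq_bigr => k _; rewrite -sumrN.
  apply: eq_big => [i|i ik]; first by rewrite eq_sym.
  by rewrite (anti k i) ?mulrN // eq_sym.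
rewrite mulr2n -[X in _ + X]opprK -swap -sumrB; apply: eq_bigr => i _.
by rewrite -sumrB; apply: eq_bigr => k _; rewrite mulrBl.
Qed.

Section InnerProduct.
Variable R : realType.
Local Notation C := R[i].

Definition cdot (p : nat) (u w : 'cV[C]_p) : C := \sum_j conjc (u j 0) * w j 0.

Lemma normc_ge0 (z : C) : 0 <= normc z.
Proof. by case: z => a b /=; rewrite sqrtr_ge0. Qed.

Lemma normc_conj (z : C) : normc z^* = normc z.
Proof. by case: z => a b /=; rewrite sqrrN. Qed.

Lemma conjc_mul_self (z : C) : z^* * z = (normc z ^+ 2)%:C.
Proof.
case: z => a b /=; rewrite sqr_sqrtr ?addr_ge0 ?sqr_ge0 //; simpc.
by apply/eqP; rewrite eq_complex /= -!expr2 eqxx /= mulrC subrr.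
Qed.

Lemma Re_le_normc (z : C) : complex.Re z <= normc z.
Proof.
case: z => a b /=; apply: le_trans (ler_norm a) _.
by rewrite -sqrtr_sqr ler_sqrt ?addr_ge0 ?sqr_ge0 // lerDl sqr_ge0.
Qed.

Lemma normc_sum_le (I : Type) (r : seq I) (P : pred I) (F : I -> C) :
  normc (\sum_(i <- r | P i) F i) <= \sum_(i <- r | P i) normc (F i).
Proof.
elim/big_rec2: _ => [|i y1 y2 _ IH]; first by rewrite ComplexField.Normc.normc0.
by apply: le_trans (le_normcD _ _) _; rewrite lerD2l.
Qed.

Lemma vnorm_ge0 p (v : 'cV[C]_p) : 0 <= vnorm v.
Proof. exact: sqrtr_ge0. Qed.

Lemma vnorm_sqr p (v : 'cV[C]_p) : vnorm v ^+ 2 = \sum_j normc (v j 0) ^+ 2.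
Proof. by rewrite sqr_sqrtr // sumr_ge0 // => i _; rewrite sqr_ge0. Qed.

Lemma cdot_self p (v : 'cV[C]_p) : cdot v v = (vnorm v ^+ 2)%:C.
Proof.
by rewrite vnorm_sqr /cdot rmorph_sum; apply: eq_bigr => i _; rewrite conjc_mul_self.
Qed.

Lemma cdotJ p (u w : 'cV[C]_p) : (cdot u w)^* = cdot w u.
Proof.
by rewrite rmorph_sum; apply: eq_bigr => j _; rewrite rmorphM /= conjcK mulrC.
Qed.

Lemma cdotDr p (u w w' : 'cV[C]_p) : cdot u (w + w') = cdot u w + cdot u w'.
Proof. by rewrite /cdot -big_split; apply: eq_bigr => j _; rewrite mxE mulrDr. Qed.

Lemma cdotNr p (u w : 'cV[C]_p) : cdot u (- w) = - cdot u w.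
Proof. by rewrite /cdot -sumrN; apply: eq_bigr => j _; rewrite mxE mulrN. Qed.

Lemma cdotBr p (u w w' : 'cV[C]_p) : cdot u (w - w') = cdot u w - cdot u w'.
Proof. by rewrite cdotDr cdotNr. Qed.

Lemma cdot0r p (u : 'cV[C]_p) : cdot u 0 = 0.
Proof. by rewrite /cdot big1 // => j _; rewrite mxE mulr0. Qed.

Lemma cdot_sumr p (I : finType) (u : 'cV[C]_p) (w : I -> 'cV[C]_p) :
  cdot u (\sum_i w i) = \sum_i cdot u (w i).
Proof.
by rewrite /cdot exchange_big; apply: eq_bigr => j _; rewrite summxE mulr_sumr.
Qed.

Lemma cdotDl p (u u' w : 'cV[C]_p) : cdot (u + u') w = cdot u w + cdot u' w.
Proof. by rewrite -[LHS]cdotJ cdotDr rmorphD /= !cdotJ. Qed.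

Lemma cdot_suml p (I : finType) (u : I -> 'cV[C]_p) (w : 'cV[C]_p) :
  cdot (\sum_i u i) w = \sum_i cdot (u i) w.
Proof.
by rewrite -[LHS]cdotJ cdot_sumr rmorph_sum; apply: eq_bigr => i _; rewrite /= cdotJ.
Qed.

Lemma cdot_adjmx p q (u : 'cV[C]_p) (M : 'M[C]_(p, q)) (w : 'cV[C]_q) :
  cdot u (M *m w) = cdot (adjmx M *m u) w.
Proof.
rewrite /cdot; under eq_bigr do rewrite mxE mulr_sumr.
rewrite exchange_big /=; apply: eq_bigr => k _.
rewrite !mxE rmorph_sum mulr_suml; apply: eq_bigr => j _.
by rewrite !mxE rmorphM /= conjcK mulrCA mulrA.
Qed.

Lemma cdot_tens p q (u w : 'cV[C]_p) (e f : 'cV[C]_q) :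
  cdot (u *t e) (w *t f) = cdot u w * cdot e f.
Proof.
rewrite /cdot mulr_sum; apply: eq_bigr => k _; rewrite !mxE.
have -> : mxtens_unindex (0 : 'I_(1 * 1)) = (0, 0).
  by case: (mxtens_unindex _) => a b; rewrite [a]ord1 [b]ord1.
by rewrite rmorphM /= mulrACA.
Qed.

Lemma vnorm_sqrt_Re p (v : 'cV[C]_p) : vnorm v = Num.sqrt (complex.Re (cdot v v)).
Proof. by rewrite cdot_self /= sqrtr_sqr ger0_norm ?vnorm_ge0. Qed.

Lemma vnorm_tens p q (u : 'cV[C]_p) (w : 'cV[C]_q) :
  vnorm (u *t w) = vnorm u * vnorm w.
Proof.
rewrite vnorm_sqrt_Re cdot_tens !cdot_self -rmorphM /= -exprMn sqrtr_sqr.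
by rewrite ger0_norm // mulr_ge0 ?vnorm_ge0.
Qed.

Lemma sum_mul_le_sqrt_sum_sqr p (x y : 'I_p -> R) :
  (forall j, 0 <= x j) -> (forall j, 0 <= y j) ->
  \sum_j x j ^+ 2 = 1 -> \sum_j x j * y j <= Num.sqrt (\sum_j y j ^+ 2).
Proof.
move=> x0 y0 sx.
have Sy0 : 0 <= \sum_j y j ^+ 2 by apply: sumr_ge0 => j _; rewrite sqr_ge0.
set b := Num.sqrt _; have bb : b ^+ 2 = \sum_j y j ^+ 2 by rewrite sqr_sqrtr.
have b0 : 0 <= b by rewrite sqrtr_ge0.
have Sxy0 : 0 <= \sum_j x j * y j by apply: sumr_ge0 => j _; rewrite mulr_ge0.
(* summing [2 b x_j y_j <= b^2 x_j^2 + y_j^2] gives [2 b S <= 2 b^2] *)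
have AMGM : \sum_j 2 * b * (x j * y j) <= \sum_j (b ^+ 2 * x j ^+ 2 + y j ^+ 2).
  by apply: ler_sum => j _; have := sqr_ge0 (b * x j - y j); nra.
move: AMGM; rewrite -mulr_sumr big_split /= -mulr_sumr sx -bb => AMGM.
have [bz|bpos] := eqVneq b 0; last first.
  have bp : 0 < b by rewrite lt_def bpos b0.
  nra.
have yz j : y j = 0.
  have Sy : \sum_j y j ^+ 2 = 0 by rewrite -bb bz expr0n.
  apply/eqP; rewrite -sqrf_eq0; apply/eqP.
  by apply: (psumr_eq0P _ Sy) => // j' _; rewrite sqr_ge0.
by rewrite big1 ?bz // => j _; rewrite yz mulr0.
Qed.

Lemma normc_cdot_le p (u w : 'cV[C]_p) : vnorm u = 1 -> normc (cdot u w) <= vnorm w.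
Proof.
move=> u1; apply: le_trans (normc_sum_le _ _ _) _.
under eq_bigr do rewrite ComplexField.Normc.normcM normc_conj.
apply: sum_mul_le_sqrt_sum_sqr => [j|j|]; rewrite ?normc_ge0 //.
by rewrite -vnorm_sqr u1 expr1n.
Qed.

Lemma cdot_col_mx p q (u w : 'cV[C]_p) (u' w' : 'cV[C]_q) :
  cdot (col_mx u u') (col_mx w w') = cdot u w + cdot u' w'.
Proof.
rewrite /cdot big_split_ord /=.
by congr (_ + _); apply: eq_bigr => j _; rewrite ?col_mxEu ?col_mxEd.
Qed.

Lemma cdot_delta_mx p (l : 'I_p) (w : 'cV[C]_p) : cdot (delta_mx l 0) w = w l 0.
Proof.
rewrite /cdot (bigD1 l) //= big1 ?addr0 => [|j jl].
  by rewrite mxE rmorph_nat !eqxx mul1r.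
by rewrite mxE rmorph_nat (negbTE jl) mul0r.
Qed.

Lemma vnorm_delta_mx p (l : 'I_p) : vnorm (delta_mx l 0 : 'cV[C]_p) = 1.
Proof. by rewrite vnorm_sqrt_Re cdot_delta_mx mxE !eqxx /= sqrtr1. Qed.

Lemma opnorm_ge_vnorm p q (M : 'M[C]_(p, q)) (u : 'cV[C]_q) :
  vnorm u = 1 -> vnorm (M *m u) <= opnorm M.
Proof.
move=> u1; apply: ub_le_sup; last by exists u.
exists (Num.sqrt (\sum_j (\sum_l normc (M j l)) ^+ 2)).
move=> _ [w /= w1 <-]; rewrite ler_sqrt; last by apply: sumr_ge0 => j _; rewrite sqr_ge0.
have entry_le1 l : normc (w l 0) <= 1.
  by rewrite -cdot_delta_mx -w1; apply: normc_cdot_le; rewrite vnorm_delta_mx.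
apply: ler_sum => j _.
have rowj : normc ((M *m w) j 0) <= \sum_l normc (M j l).
  rewrite mxE; apply: le_trans (normc_sum_le _ _ _) _; apply: ler_sum => l _.
  rewrite ComplexField.Normc.normcM.
  have := entry_le1 l; have := normc_ge0 (M j l); have := normc_ge0 (w l 0); nra.
have := normc_ge0 ((M *m w) j 0); nra.
Qed.

Lemma normc_cdot_le_opnorm p (M : 'M[C]_p) (u : 'cV[C]_p) :
  vnorm u = 1 -> normc (cdot u (M *m u)) <= opnorm M.
Proof. by move=> u1; apply: le_trans (normc_cdot_le _ u1) (opnorm_ge_vnorm _ u1). Qed.

Lemma sigma_min_le_vnorm p (M : 'M[C]_p) (u : 'cV[C]_p) :
  vnorm u = 1 -> sigma_min M <= vnorm (M *m u).
Proof.
move=> u1; apply: ge_inf; last by exists u.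
by exists 0 => _ [w _ <-]; apply: vnorm_ge0.
Qed.

Lemma adjmxK p q (M : 'M[C]_(p, q)) : adjmx (adjmx M) = M.
Proof. by apply/matrixP => i j; rewrite !mxE conjcK. Qed.

Lemma hermitian_cdot p (M : 'M[C]_p) (u w : 'cV[C]_p) :
  is_hermitian M -> cdot (M *m u) w = cdot u (M *m w).
Proof. by move=> MH; rewrite cdot_adjmx MH. Qed.

Lemma hermitian_subr_rscal p (M : 'M[C]_p) (r : R) :
  is_hermitian M -> is_hermitian (M - rscal p r).
Proof.
move=> MH; apply/matrixP => i j; rewrite -[in RHS]MH !mxE rmorphB /= eq_sym.
by case: (i == j); rewrite ?mulr1n ?mulr0n /= ?oppr0.
Qed.

Lemma commutator_subr_rscal p (M N : 'M[C]_p) (r s : R) :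
  (M - rscal p r) *m (N - rscal p s) - (N - rscal p s) *m (M - rscal p r)
    = M *m N - N *m M.
Proof. exact: commutator_subr_scalar. Qed.

Lemma vnorm_isometry p q (M : 'M[C]_(p, q)) (u : 'cV[C]_q) :
  adjmx M *m M = 1%:M -> vnorm (M *m u) = vnorm u.
Proof. by move=> MM; rewrite !vnorm_sqrt_Re cdot_adjmx mulmxA MM mul1mx. Qed.

Lemma cdot_commutator p (M N : 'M[C]_p) (u : 'cV[C]_p) :
  is_hermitian M -> is_hermitian N ->
  cdot (M *m u) (N *m u) - cdot (N *m u) (M *m u) = cdot u ((M *m N - N *m M) *m u).
Proof.
by move=> MH NH; rewrite !hermitian_cdot // mulmxBl cdotBr !mulmxA.
Qed.

Lemma cdot_hermitian_parts_sub p (I : finType) (G H : I -> 'M[C]_p) (v : 'cV[C]_p) :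
  (forall i, H i *m v = 0) ->
  cdot v ((\sum_i (G i + adjmx (G i)) - \sum_i (H i + adjmx (H i))) *m v)
    = \sum_i (cdot v (G i *m v) + conjc (cdot v (G i *m v))).
Proof.
move=> Hv; rewrite mulmxBl !mulmx_suml cdotBr !cdot_sumr.
rewrite [X in _ - X]big1 ?subr0 => [|i _]; last first.
  rewrite mulmxDl cdotDr [cdot v (adjmx _ *m v)]cdot_adjmx adjmxK Hv.
  by rewrite cdot0r -cdotJ cdot0r conjc0 addr0.
apply: eq_bigr => i _.
by rewrite mulmxDl cdotDr [cdot v (adjmx _ *m v)]cdot_adjmx adjmxK cdotJ.
Qed.

Lemma cdot_sum_tens_self p q (I : finType) (a : I -> 'cV[C]_p) (g : I -> 'cV[C]_q)
    (y : 'cV[C]_p) (e : 'cV[C]_q) :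
  cdot (\sum_i a i *t g i + y *t e) (\sum_i a i *t g i + y *t e)
    = \sum_i \sum_k cdot (a i) (a k) * cdot (g i) (g k)
      + \sum_i (cdot (a i) y * cdot (g i) e + conjc (cdot (a i) y * cdot (g i) e))
      + cdot y y * cdot e e.
Proof.
have diag : cdot (\sum_i a i *t g i) (\sum_i a i *t g i)
    = \sum_i \sum_k cdot (a i) (a k) * cdot (g i) (g k).
  rewrite cdot_suml; apply: eq_bigr => i _.
  by rewrite cdot_sumr; apply: eq_bigr => k _; apply: cdot_tens.
have cross : cdot (\sum_i a i *t g i) (y *t e) = \sum_i cdot (a i) y * cdot (g i) e.
  by rewrite cdot_suml; apply: eq_bigr => i _; apply: cdot_tens.
rewrite cdotDl !cdotDr diag cross -[cdot (y *t e) _]cdotJ cross cdot_tens.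
by rewrite big_split rmorph_sum /= !addrA.
Qed.

End InnerProduct.

Section TopUnitVector.
Variables (R : realType) (m : nat).

Lemma Pmx_col_mx0 (u : 'cV[R[i]]_m) : Pmx R m *m col_mx u 0 = col_mx u 0.
Proof. by rewrite /Pmx mul_block_col !mul1mx !mul0mx !addr0. Qed.

Lemma Qmx_col_mx0 (u : 'cV[R[i]]_m) : Qmx R m *m col_mx u 0 = 0.
Proof. by rewrite /Qmx mul_block_col !mul0mx mul1mx !addr0 col_mx0. Qed.

Lemma vnorm_col_mx0 (u : 'cV[R[i]]_m) : vnorm (col_mx u (0 : 'cV_m)) = vnorm u.
Proof. by rewrite !vnorm_sqrt_Re cdot_col_mx cdot0r addr0. Qed.

End TopUnitVector.

Section ProductState.
Variables (R : realType) (n d m : nat).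
Variables (Gam : 'I_d -> 'M[R[i]]_(m + m)) (A : 'I_d -> 'M[R[i]]_n).
Variables (B : 'M[R[i]]_n) (lam : 'I_d -> R) (nu : R[i]).
Variables (psi : 'cV[R[i]]_n) (e : 'cV[R[i]]_(m + m)).
Hypotheses (Pe : Pmx R m *m e = e) (Qe : Qmx R m *m e = 0).

Local Notation X i := (A i - rscal n (lam i)).
Local Notation a i := (X i *m psi).
Local Notation g i := (Gam i *m e).
Local Notation y := ((B - nu%:M) *m psi).
Local Notation v := (psi *t e).
Local Notation L := (localizer Gam A B lam nu).
Local Notation F := (Fmx Gam A B lam nu).

Lemma localizer_mul_tens : L *m v = \sum_i a i *t g i + y *t e.
Proof.
rewrite /localizer mulmxBl mulmxDl mulmx_suml !tensmx_mul Pe Qe tensmx0 subr0.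
by congr (_ + _); apply: eq_bigr => i _; rewrite tensmx_mul.
Qed.

Hypotheses (GamH : forall i, is_hermitian (Gam i)) (AH : forall i, is_hermitian (A i)).

Let XH i : is_hermitian (X i) := hermitian_subr_rscal _ (AH i).

Lemma cdot_Fmx_tens :
  cdot v (F *m v)
    = \sum_i (cdot (a i) y * cdot (g i) e + conjc (cdot (a i) y * cdot (g i) e)).
Proof.
have Gv i : ((X i *m (B - nu%:M)) *t (Gam i *m Pmx R m)) *m v = (X i *m y) *t g i.
  by rewrite tensmx_mul -!mulmxA Pe.
have Hv i : ((X i *m adjmx (B - nu%:M)) *t (Gam i *m Qmx R m)) *m v = 0.
  by rewrite tensmx_mul -!mulmxA Qe mulmx0 tensmx0.
rewrite /Fmx /= cdot_hermitian_parts_sub //; apply: eq_bigr => i _.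
rewrite Gv cdot_tens (hermitian_cdot _ _ (XH i)).
by rewrite (hermitian_cdot _ _ (GamH i)).
Qed.

Hypotheses (Gam2 : forall i, Gam i *m Gam i = 1%:M) (e1 : vnorm e = 1).

Lemma vnorm_localizer_tens_sqr :
  (vnorm (L *m v) ^+ 2)%:C
    = (\sum_i vnorm (a i) ^+ 2 + vnorm y ^+ 2)%:C
      + \sum_i \sum_(k | i != k) cdot (a i) (a k) * cdot (g i) (g k)
      + cdot v (F *m v).
Proof.
have gg i : cdot (g i) (g i) = 1.
  by rewrite hermitian_cdot // mulmxA Gam2 mul1mx cdot_self e1 expr1n.
have diag i : \sum_k cdot (a i) (a k) * cdot (g i) (g k)
    = (vnorm (a i) ^+ 2)%:C + \sum_(k | i != k) cdot (a i) (a k) * cdot (g i) (g k).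
  rewrite (bigD1 i) //= gg mulr1 cdot_self.
  by congr (_ + _); apply: eq_bigl => k; rewrite eq_sym.
rewrite -[LHS]cdot_self localizer_mul_tens cdot_sum_tens_self cdot_Fmx_tens.
rewrite (eq_bigr _ (fun i _ => diag i)) big_split /= !cdot_self e1 expr1n mulr1.
rewrite rmorphD rmorph_sum /=.
ring.
Qed.

Hypothesis (GamA : forall i j, i != j -> Gam i *m Gam j = - (Gam j *m Gam i)).
Hypothesis (psi1 : vnorm psi = 1).

Lemma normc_offdiag_le :
  normc (\sum_i \sum_(k | i != k) cdot (a i) (a k) * cdot (g i) (g k))
    <= \sum_j \sum_(k | j != k) opnorm (A j *m A k - A k *m A j).
Proof.
set S := \sum_i _; set T := \sum_j _.
have g1 i : vnorm (g i) = 1 by rewrite vnorm_isometry // GamH Gam2.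
have anti i k : i != k -> cdot (g k) (g i) = - cdot (g i) (g k).
  move=> ik; rewrite !hermitian_cdot // !mulmxA GamA 1?eq_sym //.
  by rewrite mulNmx cdotNr.
have twice : normc S *+ 2 <= T.
  rewrite -normcMn (sum_offdiag_antisym _ anti).
  apply: le_trans (normc_sum_le _ _ _) _; apply: ler_sum => i _.
  apply: le_trans (normc_sum_le _ _ _) _; apply: ler_sum => k _.
  rewrite (cdot_commutator _ (XH i) (XH k)) commutator_subr_rscal.
  rewrite ComplexField.Normc.normcM -[Z in _ <= Z]mulr1.
  apply: ler_pM; rewrite ?normc_ge0 ?normc_cdot_le_opnorm //.
  by rewrite -(g1 k) normc_cdot_le.
have := normc_ge0 S; lra.
Qed.

Lemma vnorm_localizer_tens_sqr_le :
  vnorm (L *m v) ^+ 2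
    <= \sum_i vnorm (a i) ^+ 2 + vnorm y ^+ 2
       + (\sum_j \sum_(k | j != k) opnorm (A j *m A k - A k *m A j) + opnorm F).
Proof.
have v1 : vnorm v = 1 by rewrite vnorm_tens psi1 e1 mulr1.
have ReD (x : R) (z : R[i]) : complex.Re (x%:C + z) = x + complex.Re z by case: z.
have := f_equal (@complex.Re R) vnorm_localizer_tens_sqr; rewrite -addrA ReD /= => ->.
rewrite lerD2l; apply: le_trans (Re_le_normc _) _; apply: le_trans (le_normcD _ _) _.
exact: lerD normc_offdiag_le (normc_cdot_le_opnorm _ v1).
Qed.

End ProductState.

Theorem mainTheorem4 (R : realType) (n d m : nat)
    (Gam : 'I_d -> 'M[R[i]]_(m + m))
    (A : 'I_d -> 'M[R[i]]_n) (B : 'M[R[i]]_n)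
    (lam : 'I_d -> R) (nu : R[i]) (eps1 eps2 : R) :
  (0 < n)%N -> (0 < d)%N -> (0 < m)%N ->
  clifford_rep Gam ->
  (forall i, is_hermitian (A i)) ->
  0 <= eps1 -> 0 <= eps2 ->
  (exists psi : 'cV[R[i]]_n,
      vnorm psi = 1 /\
      \sum_(j < d) vnorm (A j *m psi - rscal n (lam j) *m psi) ^+ 2
        + vnorm (B *m psi - nu *: psi) ^+ 2 <= eps1) ->
  \sum_(j < d) \sum_(k < d | j != k) opnorm (A j *m A k - A k *m A j)
    + opnorm (Fmx Gam A B lam nu) <= eps2 ->
  (lam, nu) \in clifford_pseudospectrum Gam A B (Num.sqrt (eps1 + eps2)).
Proof.
move=> _ _ m0 [GamH [Gam2 GamA]] AH eps1_ge0 eps2_ge0 [psi [psi1 Hpsi]] Heps2.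
pose e : 'cV[R[i]]_(m + m) := col_mx (delta_mx (Ordinal m0) 0) 0.
have e1 : vnorm e = 1 by rewrite vnorm_col_mx0 vnorm_delta_mx.
have v1 : vnorm (psi *t e) = 1 by rewrite vnorm_tens psi1 e1 mulr1.
have := vnorm_localizer_tens_sqr_le B lam nu (Pmx_col_mx0 _) (Qmx_col_mx0 _)
  GamH AH Gam2 e1 GamA psi1.
have -> : (B - nu%:M) *m psi = B *m psi - nu *: psi by rewrite mulmxBl mul_scalar_mx.
under eq_bigr do rewrite mulmxBl.
rewrite -/e => Lbound.
apply/mem_set/(le_trans (sigma_min_le_vnorm _ v1)).
rewrite -(ger0_norm (vnorm_ge0 _)) -sqrtr_sqr ler_sqrt ?addr_ge0 //.
by apply: le_trans Lbound _; apply: lerD.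
Qed.
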